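(* Let $Q:(-\infty,-1)\to(-\infty,0)$ be the inverse of the strictly increasing function $G\mapsto G-e^G$ on $(-\infty,0)$, and define $R:\mathbb{R}\to\mathbb{R}$ by $R(V)=-2(1-e^{Q(V)})^2$ for $V<-1$ and $R(V)=4(V+1)$ for $V\ge -1$. Fix $m<-1$. For $n\in\mathbb{R}$ let $V(t;n)$ denote the unique solution of $V''+3V'=R(V)$, $t>0$, $V(0)=m$, $V'(0)=n$ (prime denoting $d/dt$, $V_t=dV/dt$). Define $\beta^0=\{n\in\mathbb{R}: V_t(t;n)>0 \text{ and } V(t;n)\le -1 \text{ for all } t>0\}$. Then $\beta^0$ consists of exactly one point. *)

From Stdlib Require Import Reals Lra ClassicalEpsilon.
From Coquelicot Require Import Coquelicot.
Open Scope R_scope.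

(* Q V is some G < 0 with G - exp G = V (unique, since the map is strictly
   increasing on (-oo,0)); outside (-oo,-1) the value is irrelevant. *)
Definition Q (V : R) : R :=
  epsilon (inhabits 0) (fun G => G < 0 /\ G - exp G = V).

Definition Rfun (V : R) : R :=
  if Rlt_dec V (-1) then -2 * (1 - exp (Q V)) ^ 2 else 4 * (V + 1).

Definition is_sol (m n : R) (V Vt : R -> R) : Prop :=
  V 0 = m /\ Vt 0 = n /\
  (forall t, 0 <= t -> is_derive V t (Vt t)) /\
  (forall t, 0 <= t -> is_derive Vt t (Rfun (V t) - 3 * Vt t)).

Definition beta0 (m n : R) : Prop :=
  exists V Vt, is_sol m n V Vt /\
    (forall t, 0 < t -> 0 < Vt t /\ V t <= -1).

(* Write W = V'.  The nonlinearity R is nondecreasing, 4-Lipschitz and vanishes at -1, so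
   Picard iteration gives global solutions, they depend continuously on n, and the identity
   (e^{3t} W)' = e^{3t} R(V) controls the sign of W.

   Existence is a shooting argument.  The set of n whose trajectory enters {W < 0, V < -1}
   and the set of n whose trajectory enters {W > 0, V > -1} are open and disjoint (both
   regions are forward invariant), and they contain 0 and 18 - 4m respectively.  Hence some
   n lies in neither, and its trajectory stays in {W > 0, V < -1}: it could leave only into
   one of those regions or through the equilibrium (-1, 0), which no other trajectory
   reaches in finite time.

   Uniqueness: for n1 < n2 the solutions satisfy V2 - V1 >= (n2 - n1)(1 - e^{-3t})/3, while
   V1 tends to -1 when n1 is in beta^0, so V2 would eventually exceed -1. *)

From Stdlib Require Import Reals Lra Lia Factorial Classical ClassicalEpsilon.
From Coquelicot Require Import Coquelicot.
Open Scope R_scope.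

Lemma continuous_of_is_derive (f : R -> R) x l : is_derive f x l -> continuous f x.
Proof.
  intros H. apply (ex_derive_continuous (K := R_AbsRing) (V := R_NormedModule)). now exists l.
Qed.

Lemma nondecreasing_of_derive_nonneg (f df : R -> R) a b : a <= b ->
  (forall x, a <= x <= b -> is_derive f x (df x)) ->
  (forall x, a <= x <= b -> 0 <= df x) -> f a <= f b.
Proof.
  intros Hab Hd Hp.
  destruct (MVT_gen f a b df) as [c [Hc Hfc]].
  - intros x Hx. apply Hd. rewrite Rmin_left, Rmax_right in Hx; lra.
  - intros x Hx. apply continuity_pt_filterlim, (continuous_of_is_derive _ _ (df x)), Hd.
    rewrite Rmin_left, Rmax_right in Hx; lra.
  - rewrite Rmin_left, Rmax_right in Hc by lra.
    assert (0 <= df c * (b - a)) by (apply Rmult_le_pos; [apply Hp|]; lra). lra.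
Qed.

Lemma exp_weighted_mono (u du : R -> R) c a b : a <= b ->
  (forall x, a <= x <= b -> is_derive u x (du x)) ->
  (forall x, a <= x <= b -> c * u x <= du x) ->
  exp (- c * a) * u a <= exp (- c * b) * u b.
Proof.
  intros Hab Hd Hp.
  apply (nondecreasing_of_derive_nonneg (fun s => exp (- c * s) * u s)
           (fun s => exp (- c * s) * (du s - c * u s))); auto.
  - intros x Hx. auto_derive; [repeat split; exists (du x); now apply Hd|].
    replace (Derive (fun x0 : R => u x0) x) with (du x)
      by (symmetry; now apply is_derive_unique, Hd). ring.
  - intros x Hx. apply Rmult_le_pos; [left; apply exp_pos | specialize (Hp x Hx); lra].
Qed.

Lemma locally_ex (P : R -> Prop) t :
  locally t P -> exists e, 0 < e /\ forall s, Rabs (s - t) < e -> P s.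
Proof. intros [e He]. exists e. split; [apply cond_pos | intros s Hs; apply He, Hs]. Qed.

Lemma nonneg_of_pos_before (f : R -> R) a t : continuous f t -> a < t ->
  (forall s, a <= s < t -> 0 < f s) -> 0 <= f t.
Proof.
  intros Hc Hat Hpos. apply Rnot_lt_le. intros Hneg.
  destruct (locally_ex (fun s => f s < 0) t) as [e [He Hs]].
  { apply (Hc (fun y => y < 0)). now apply open_lt. }
  set (s := Rmax a (t - e / 2)).
  assert (Hsa : a <= s < t) by (unfold s, Rmax; destruct Rle_dec; lra).
  assert (f s < 0) by (apply Hs; unfold s, Rmax; destruct Rle_dec; apply Rabs_def1; lra).
  specialize (Hpos s Hsa). lra.
Qed.

Lemma positive_persists (f : R -> R) a :
  (forall t, a <= t -> continuous f t) -> 0 < f a ->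
  (forall t, a < t -> (forall s, a <= s <= t -> 0 <= f s) -> 0 < f t) ->
  forall t, a <= t -> 0 < f t.
Proof.
  intros Hc Ha Hstep T HaT. apply Rnot_le_lt. intros HfT.
  set (E := fun x => a <= x <= T /\ forall s, a <= s <= x -> 0 < f s).
  assert (Ea : E a) by (split; [lra | intros s Hs; replace s with a by lra; exact Ha]).
  destruct (completeness E) as [t1 [Hub Hlub]].
  { exists T. intros x Hx. apply Hx. }
  { now exists a. }
  assert (Hat1 : a <= t1) by now apply Hub.
  assert (Ht1T : t1 <= T) by (apply Hlub; intros x Hx; apply Hx).
  assert (Hbelow : forall s, a <= s < t1 -> 0 < f s).
  { intros s Hs. destruct (classic (exists x, E x /\ s < x)) as [[x [[_ Hx] Hsx]] | Hn].
    - apply Hx; lra.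
    - exfalso. assert (t1 <= s); [|lra]. apply Hlub. intros x Ex.
      apply Rnot_lt_le. intros Hsx. apply Hn. now exists x. }
  assert (Ht1 : 0 < f t1).
  { destruct (Req_dec a t1) as [<-|Hne]; [exact Ha|].
    apply Hstep; [lra|]. intros s Hs. destruct (Req_dec s t1) as [->|Hs1].
    - apply (nonneg_of_pos_before f a); auto; lra.
    - left; apply Hbelow; lra. }
  destruct (locally_ex (fun s => 0 < f s) t1) as [e [He Hnear]].
  { apply (Hc t1 Hat1 (fun y => 0 < y)). now apply open_gt. }
  destruct (Rle_or_lt (t1 + e / 2) T) as [Hin|Hout].
  - assert (E (t1 + e / 2)).
    { split; [lra|]. intros s Hs. destruct (Rlt_or_le s t1); [apply Hbelow; lra|].
      apply Hnear, Rabs_def1; lra. }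
    assert (t1 + e / 2 <= t1) by now apply Hub. lra.
  - assert (0 < f T) by (apply Hnear, Rabs_def1; lra). lra.
Qed.

Lemma at_right_lt (f : R -> R) (a l c : R) : is_derive f a l -> f a <= c -> (f a < c \/ l < 0) ->
  at_right a (fun s => f s < c).
Proof.
  intros Hd Hle [Hlt | Hl].
  - apply filter_le_within. apply (continuous_of_is_derive _ _ _ Hd (fun y => y < c)).
    now apply open_lt.
  - apply is_derive_Reals in Hd. destruct (Hd (- l / 2)) as [d Hdd]; [lra|].
    exists d. intros s Hs Has. change R in s. change (Rabs (s - a) < d) in Hs.
    assert (K := Hdd (s - a) ltac:(lra) Hs). replace (a + (s - a)) with s in K by ring.
    apply Rabs_def2 in K. destruct K as [K _].
    assert (E : f s - f a = (f s - f a) / (s - a) * (s - a)) by (field; lra).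
    nra.
Qed.

Lemma at_right_gt (f : R -> R) (a l c : R) : is_derive f a l -> c <= f a -> (c < f a \/ 0 < l) ->
  at_right a (fun s => c < f s).
Proof.
  intros Hd Hle Hor.
  apply filter_imp with (fun s => - f s < - c); [intros; lra|].
  apply (at_right_lt (fun s => - f s) a (- l)); [apply (is_derive_opp f a l Hd) | lra | lra].
Qed.

Lemma at_right_witness (P Q : R -> Prop) a : at_right a P -> at_right a Q ->
  exists s, a < s /\ P s /\ Q s.
Proof.
  intros HP HQ.
  assert (Ha : at_right a (fun s => a < s)) by (exists (mkposreal 1 Rlt_0_1); now intros).
  destruct (filter_ex (F := at_right a) _ (filter_and _ _ Ha (filter_and _ _ HP HQ))) as [s Hs].
  now exists s.
Qed.

Lemma interval_not_open_split (A B : R -> Prop) a b : a <= b -> A a -> B b ->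
  open A -> open B -> (forall x, A x -> B x -> False) ->
  exists x, a <= x <= b /\ ~ A x /\ ~ B x.
Proof.
  intros Hab Ha Hb OA OB Hdisj.
  set (E := fun x => a <= x <= b /\ A x).
  destruct (completeness E) as [s [Hub Hlub]].
  { exists b. intros x Hx. apply Hx. }
  { exists a. split; [lra | exact Ha]. }
  assert (Has : a <= s) by (apply Hub; split; [lra | exact Ha]).
  assert (Hsb : s <= b) by (apply Hlub; intros x Hx; apply Hx).
  exists s. split; [lra | split].
  - intros As. destruct (locally_ex A s (OA s As)) as [e [He HA]].
    assert (Hsb' : s < b)
      by (destruct Hsb as [H | H]; [lra | subst s; exfalso; exact (Hdisj b As Hb)]).
    set (x := Rmin (s + e / 2) b).
    assert (Hx : s < x <= s + e / 2) by (unfold x, Rmin; destruct Rle_dec; lra).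
    assert (E x) by (split; [unfold x, Rmin; destruct Rle_dec; lra | apply HA, Rabs_def1; lra]).
    assert (x <= s) by now apply Hub. lra.
  - intros Bs. destruct (locally_ex B s (OB s Bs)) as [e [He HB]].
    destruct (classic (exists x, E x /\ s - e < x)) as [[x [[Hx1 Hx2] Hx3]] | Hn].
    + assert (x <= s) by (apply Hub; now split).
      apply (Hdisj x Hx2). apply HB, Rabs_def1; lra.
    + assert (s <= s - e); [|lra]. apply Hlub. intros x Ex.
      apply Rnot_lt_le. intros Hx. apply Hn. now exists x.
Qed.

(** * The nonlinearity [Rfun] *)

Lemma exp_le_exp x y : x <= y -> exp x <= exp y.
Proof. intros [H | ->]; [left; now apply exp_increasing | lra]. Qed.

Lemma exp_le_1 x : x <= 0 -> exp x <= 1.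
Proof. intros H. rewrite <- exp_0. now apply exp_le_exp. Qed.

Lemma Q_spec V : V < -1 -> Q V < 0 /\ Q V - exp (Q V) = V.
Proof.
  intros HV. unfold Q. apply epsilon_spec.
  destruct (IVT (fun G => G - exp G - V) V 0) as [z [Hz1 Hz2]].
  - intros x. apply continuity_pt_filterlim.
    apply (continuous_of_is_derive (fun G => G - exp G - V) x (1 - exp x)). auto_derive; auto; ring.
  - lra.
  - assert (0 < exp V) by apply exp_pos. lra.
  - rewrite exp_0. lra.
  - exists z. split; [|lra]. destruct Hz1 as [_ [Hz | Hz]]; [exact Hz|].
    subst. rewrite exp_0 in Hz2. lra.
Qed.

Lemma Rfun_right V : -1 <= V -> Rfun V = 4 * (V + 1).
Proof. intros H. unfold Rfun. destruct (Rlt_dec V (-1)); [lra | reflexivity]. Qed.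

Lemma Rfun_left V : V <= -1 ->
  exists G, G <= 0 /\ V = G - exp G /\ Rfun V = -2 * (1 - exp G) ^ 2.
Proof.
  intros [HV | HV].
  - destruct (Q_spec V HV) as [HQ HQV]. exists (Q V). split; [lra | split; [lra|]].
    unfold Rfun. destruct (Rlt_dec V (-1)); [reflexivity | lra].
  - exists 0. rewrite exp_0, HV, Rfun_right by lra. split; [lra | split; ring].
Qed.

Lemma exp_increment_lt_nonpos G1 G2 : G1 < G2 <= 0 -> exp G2 - exp G1 < G2 - G1.
Proof.
  intros H.
  assert (E : exp G1 = exp G2 * exp (G1 - G2)) by (rewrite <- exp_plus; f_equal; ring).
  assert (1 + (G1 - G2) < exp (G1 - G2)) by (apply exp_ineq1; lra).
  assert (exp G2 <= 1) by (apply exp_le_1; lra).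
  assert (0 < exp G2) by apply exp_pos.
  nra.
Qed.

(* The derivative of G - 2 exp G + exp (2 G) / 2 is (1 - exp G)^2. *)
Lemma exp_increment_quadratic_le G1 G2 : G1 <= G2 ->
  (exp G2 - exp G1) * (4 - exp G1 - exp G2) <= 2 * (G2 - G1).
Proof.
  intros H.
  assert (K : G1 - 2 * exp G1 + exp G1 * exp G1 / 2 <= G2 - 2 * exp G2 + exp G2 * exp G2 / 2).
  { apply (nondecreasing_of_derive_nonneg (fun G => G - 2 * exp G + exp G * exp G / 2)
             (fun G => (1 - exp G) ^ 2)); auto.
    - intros x _. auto_derive; auto; field.
    - intros x _. apply pow2_ge_0. }
  nra.
Qed.

Lemma Rfun_increment_left x y : x <= y <= -1 -> 0 <= Rfun y - Rfun x <= 4 * (y - x).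
Proof.
  intros Hxy.
  destruct (Rfun_left x) as [G1 [HG1 [Ex Rx]]]; [lra|].
  destruct (Rfun_left y) as [G2 [HG2 [Ey Ry]]]; [lra|].
  assert (HG : G1 <= G2).
  { apply Rnot_lt_le. intros H. assert (K := exp_increment_lt_nonpos G2 G1 ltac:(lra)). lra. }
  assert (P := exp_increment_quadratic_le G1 G2 HG).
  assert (exp G1 <= exp G2) by now apply exp_le_exp.
  assert (exp G2 <= 1) by now apply exp_le_1.
  rewrite Rx, Ry. subst x y. split; nra.
Qed.

Lemma Rfun_increment x y : x <= y -> 0 <= Rfun y - Rfun x <= 4 * (y - x).
Proof.
  intros Hxy.
  assert (Right : forall u v, -1 <= u <= v -> 0 <= Rfun v - Rfun u <= 4 * (v - u))
    by (intros u v Huv; rewrite !Rfun_right by lra; lra).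
  destruct (Rle_or_lt y (-1)) as [Hy | Hy]; [apply Rfun_increment_left; lra|].
  destruct (Rle_or_lt (-1) x) as [Hx | Hx]; [apply Right; lra|].
  pose proof (Rfun_increment_left x (-1) ltac:(lra)). pose proof (Right (-1) y ltac:(lra)). lra.
Qed.

Lemma Rfun_nondecreasing x y : x <= y -> Rfun x <= Rfun y.
Proof. intros H. pose proof (Rfun_increment x y H). lra. Qed.

Lemma Rfun_lipschitz x y : Rabs (Rfun x - Rfun y) <= 4 * Rabs (x - y).
Proof.
  destruct (Rle_or_lt x y) as [H | H].
  - pose proof (Rfun_increment x y H). rewrite !Rabs_left1 by lra. lra.
  - pose proof (Rfun_increment y x ltac:(lra)). rewrite !Rabs_right by lra. lra.
Qed.

Lemma Rfun_m1 : Rfun (-1) = 0.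
Proof. rewrite Rfun_right by lra. ring. Qed.

Lemma Rfun_neg V : V < -1 -> Rfun V < 0.
Proof.
  intros HV. destruct (Rfun_left V) as [G [HG [EV RV]]]; [lra|].
  assert (G <> 0) by (intros ->; rewrite exp_0 in EV; lra).
  assert (exp G < 1) by (rewrite <- exp_0; apply exp_increasing; lra).
  rewrite RV. nra.
Qed.

Lemma Rfun_ge_m2 V : -2 <= Rfun V.
Proof.
  destruct (Rle_or_lt V (-1)) as [HV | HV].
  - destruct (Rfun_left V HV) as [G [HG [_ RV]]].
    assert (exp G <= 1) by now apply exp_le_1. assert (0 < exp G) by apply exp_pos.
    rewrite RV. nra.
  - rewrite Rfun_right; lra.
Qed.

Lemma eq_of_forall_abs_le (a b : R) : (forall eps, 0 < eps -> Rabs (a - b) <= eps) -> a = b.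
Proof.
  intros H. apply Rminus_diag_uniq, Rabs_eq_0, Rle_antisym; [| apply Rabs_pos].
  apply Rnot_lt_le. intros Hpos. specialize (H (Rabs (a - b) / 2) ltac:(lra)). lra.
Qed.

Lemma continuous_Rmin (f h : R -> R) t : continuous f t -> continuous h t ->
  continuous (fun s => Rmin (f s) (h s)) t.
Proof.
  intros Hf Hh. apply filterlim_locally. intros eps.
  assert (Lf : locally t (fun s => ball (f t) eps (f s))) by apply (Hf _ (locally_ball _ _)).
  assert (Lh : locally t (fun s => ball (h t) eps (h s))) by apply (Hh _ (locally_ball _ _)).
  generalize (filter_and _ _ Lf Lh). apply filter_imp. intros s [Hs1 Hs2].
  change (Rabs (f s - f t) < eps) in Hs1. change (Rabs (h s - h t) < eps) in Hs2.
  change (Rabs (Rmin (f s) (h s) - Rmin (f t) (h t)) < eps).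
  apply Rabs_def2 in Hs1, Hs2. apply Rabs_def1; unfold Rmin; do 2 destruct Rle_dec; lra.
Qed.

Lemma continuous_Rmax0 t : continuous (fun s => Rmax 0 s) t.
Proof.
  apply filterlim_locally. intros eps. exists eps. intros s Hs.
  change (Rabs (s - t) < eps) in Hs. change (Rabs (Rmax 0 s - Rmax 0 t) < eps).
  apply Rabs_def2 in Hs. apply Rabs_def1; unfold Rmax; do 2 destruct Rle_dec; lra.
Qed.

Definition continuous_all (f : R -> R) := forall t, continuous f t.

Lemma ex_RInt_of_continuous_all (h : R -> R) a b : continuous_all h -> ex_RInt h a b.
Proof. intros H. apply (ex_RInt_continuous (V := R_CompleteNormedModule)). intros; apply H. Qed.

Lemma is_derive_primitive (h : R -> R) c : continuous_all h ->
  forall t, is_derive (fun t => c + RInt h 0 t) t (h t).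
Proof.
  intros H t. rewrite <- (Rplus_0_l (h t)).
  apply (is_derive_plus (fun _ => c) (fun t => RInt h 0 t)).
  { apply (is_derive_const (K := R_AbsRing) (V := R_NormedModule)). }
  apply (is_derive_RInt h (fun t => RInt h 0 t) 0 t); [| apply H].
  apply filter_forall. intros b. apply (RInt_correct (V := R_CompleteNormedModule)).
  apply ex_RInt_of_continuous_all, H.
Qed.

Lemma continuous_all_primitive (h : R -> R) c : continuous_all h ->
  continuous_all (fun t => c + RInt h 0 t).
Proof. intros H t. apply (continuous_of_is_derive _ _ _ (is_derive_primitive h c H t)). Qed.

Lemma RInt_minus_continuous (h1 h2 : R -> R) a b : continuous_all h1 -> continuous_all h2 ->
  RInt (fun s => h1 s - h2 s) a b = RInt h1 a b - RInt h2 a b.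
Proof.
  intros H1 H2.
  apply (RInt_minus (V := R_CompleteNormedModule)); now apply ex_RInt_of_continuous_all.
Qed.

Lemma RInt_const_R (c a b : R) : RInt (fun _ => c) a b = (b - a) * c.
Proof. now rewrite RInt_const. Qed.

Lemma abs_RInt_le_RInt (h u : R -> R) t : 0 <= t -> continuous_all h -> continuous_all u ->
  (forall s, 0 <= s <= t -> Rabs (h s) <= u s) -> Rabs (RInt h 0 t) <= RInt u 0 t.
Proof.
  intros Ht Ch Cu Hb.
  eapply Rle_trans; [apply abs_RInt_le; [exact Ht | now apply ex_RInt_of_continuous_all]|].
  apply RInt_le; [exact Ht | | now apply ex_RInt_of_continuous_all | intros; apply Hb; lra].
  apply ex_RInt_of_continuous_all. intros s. now apply continuous_Rabs_comp.
Qed.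

Lemma abs_RInt_add_le (h1 h2 u : R -> R) t : 0 <= t ->
  continuous_all h1 -> continuous_all h2 -> continuous_all u ->
  (forall s, 0 <= s <= t -> Rabs (h1 s) + Rabs (h2 s) <= u s) ->
  Rabs (RInt h1 0 t) + Rabs (RInt h2 0 t) <= RInt u 0 t.
Proof.
  intros Ht C1 C2 Cu Hb.
  assert (A1 : continuous_all (fun s => Rabs (h1 s))) by (intros s; now apply continuous_Rabs_comp).
  assert (A2 : continuous_all (fun s => Rabs (h2 s))) by (intros s; now apply continuous_Rabs_comp).
  pose proof (abs_RInt_le_RInt h1 _ t Ht C1 A1 (fun s _ => Rle_refl _)) as B1.
  pose proof (abs_RInt_le_RInt h2 _ t Ht C2 A2 (fun s _ => Rle_refl _)) as B2.
  assert (B : RInt (fun s => Rabs (h1 s) + Rabs (h2 s)) 0 t <= RInt u 0 t).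
  { apply RInt_le; [exact Ht | | now apply ex_RInt_of_continuous_all | intros; apply Hb; lra].
    apply ex_RInt_of_continuous_all. intros s. now apply (continuous_plus (fun s => Rabs (h1 s))). }
  rewrite (RInt_plus (V := R_CompleteNormedModule)) in B by now apply ex_RInt_of_continuous_all.
  change (RInt (fun x => Rabs (h1 x)) 0 t + RInt (fun x => Rabs (h2 x)) 0 t <= RInt u 0 t) in B.
  lra.
Qed.

Lemma RInt_pow_fact (C K : R) k t :
  RInt (fun s => K * (C * (K * s) ^ S k / INR (fact (S k)))) 0 t
  = C * (K * t) ^ S (S k) / INR (fact (S (S k))).
Proof.
  assert (Hf : INR (fact (S k)) <> 0) by apply INR_fact_neq_0.
  assert (HS : INR (S (S k)) <> 0) by (apply not_0_INR; lia).
  apply is_RInt_unique.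
  replace (C * (K * t) ^ S (S k) / INR (fact (S (S k)))) with
    (minus (C * (K * t) ^ S (S k) / INR (fact (S (S k))))
           (C * (K * 0) ^ S (S k) / INR (fact (S (S k))))).
  2: { rewrite Rmult_0_r, pow_i by lia. unfold Rdiv. rewrite Rmult_0_r, Rmult_0_l.
       apply (minus_zero_r (G := R_AbelianGroup)). }
  apply (is_RInt_derive (fun s => C * (K * s) ^ S (S k) / INR (fact (S (S k))))).
  - intros x _. rewrite (fact_simpl (S k)), mult_INR.
    apply (is_derive_ext (fun s => C / (INR (S (S k)) * INR (fact (S k))) * (K * s) ^ S (S k))).
    { intros s. change (C / (INR (S (S k)) * INR (fact (S k))) * (K * s) ^ S (S k)
              = C * (K * s) ^ S (S k) / (INR (S (S k)) * INR (fact (S k)))). unfold Rdiv. ring. }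
    replace (K * (C * (K * x) ^ S k / INR (fact (S k)))) with
      (C / (INR (S (S k)) * INR (fact (S k))) * (INR (S (S k)) * K * (K * x) ^ pred (S (S k)))).
    2: { simpl pred. field. split; assumption. }
    apply is_derive_scal, is_derive_pow. auto_derive; auto; ring.
  - intros x _. apply (ex_derive_continuous (K := R_AbsRing) (V := R_NormedModule)).
    auto_derive. exact I.
Qed.

Lemma series_tail_small (a : nat -> R) eps : ex_series a -> 0 < eps ->
  exists N, forall k, (N <= k)%nat -> Rabs (Series (fun j => a (k + j)%nat)) < eps.
Proof.
  intros Ha He.
  destruct (proj1 (is_series_Reals a (Series a)) (Series_correct a Ha) eps He) as [N HN].
  exists (S N). intros k Hk.
  assert (E := Series_incr_n a k ltac:(lia) Ha).
  specialize (HN (pred k) ltac:(lia)). unfold R_dist in HN.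
  replace (Series (fun j => a (k + j)%nat)) with (- (sum_f_R0 a (pred k) - Series a)) by lra.
  now rewrite Rabs_Ropp.
Qed.

Lemma abs_Series_le (b c : nat -> R) : ex_series c -> (forall j, Rabs (b j) <= c j) ->
  Rabs (Series b) <= Series c.
Proof.
  intros Hc Hb.
  assert (Ea : ex_series (fun j => Rabs (b j))).
  { apply (ex_series_le (K := R_AbsRing) (V := R_CompleteNormedModule) _ c); [|exact Hc].
    intros j. unfold norm; simpl. unfold abs; simpl. rewrite Rabs_Rabsolu. apply Hb. }
  eapply Rle_trans; [now apply Series_Rabs|].
  apply Series_le; [|exact Hc]. intros j. split; [apply Rabs_pos | apply Hb].
Qed.

Lemma sum_f_R0_telescoping (f : nat -> R) k : sum_f_R0 (fun j => f (S j) - f j) k = f (S k) - f O.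
Proof. induction k as [|k IH]; simpl; [|rewrite IH]; ring. Qed.

Lemma telescoping_tail_bound (f a : nat -> R) k : ex_series a ->
  (forall j, Rabs (f (S j) - f j) <= a j) ->
  Rabs (f O + Series (fun j => f (S j) - f j) - f k) <= Series (fun j => a (k + j)%nat).
Proof.
  intros Ha Hb.
  assert (Hd : ex_series (fun j => f (S j) - f j)).
  { apply (ex_series_le (K := R_AbsRing) (V := R_CompleteNormedModule) _ a); [|exact Ha].
    intros j. apply Hb. }
  destruct k as [|k].
  - replace (f O + Series (fun j => f (S j) - f j) - f O) with (Series (fun j => f (S j) - f j))
      by ring.
    apply abs_Series_le; [exact Ha | apply Hb].
  - rewrite (Series_incr_n _ (S k)), sum_f_R0_telescoping by (lia || exact Hd). simpl pred.
    replace (f O + (f (S k) - f O + Series (fun j => f (S (S k + j)) - f (S k + j)%nat)) - f (S k))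
      with (Series (fun j => f (S (S k + j)) - f (S k + j)%nat)) by ring.
    apply abs_Series_le; [now apply (ex_series_incr_n a (S k)) | intros j; apply Hb].
Qed.

Definition unif_cvg_on (fk : nat -> R -> R) (f : R -> R) (a b : R) : Prop :=
  forall eps, 0 < eps -> exists N, forall k x, (N <= k)%nat -> a <= x <= b ->
    Rabs (f x - fk k x) <= eps.

Lemma continuous_of_unif_cvg (fk : nat -> R -> R) (f : R -> R) a b t :
  (forall k, continuous (fk k) t) -> unif_cvg_on fk f a b -> a < t < b -> continuous f t.
Proof.
  intros Hc Hu Ht. apply filterlim_locally. intros eps.
  destruct (Hu (eps / 3)) as [N HN]; [apply Rdiv_lt_0_compat; [apply cond_pos | lra]|].
  assert (Hthird : 0 < eps / 3) by (apply Rdiv_lt_0_compat; [apply cond_pos | lra]).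
  assert (LN : locally t (fun s => ball (fk N t) (mkposreal _ Hthird) (fk N s)))
    by apply (Hc N _ (locally_ball _ _)).
  assert (Lab : locally t (fun s => a < s < b)).
  { exists (mkposreal _ (Rmin_pos _ _ (Rgt_minus _ _ (proj2 Ht)) (Rgt_minus _ _ (proj1 Ht)))).
    intros s Hs. change (Rabs (s - t) < Rmin (b - t) (t - a)) in Hs.
    pose proof (Rmin_l (b - t) (t - a)). pose proof (Rmin_r (b - t) (t - a)).
    apply Rabs_def2 in Hs. lra. }
  generalize (filter_and _ _ LN Lab). apply filter_imp. intros s [Hs Hab].
  change (Rabs (fk N s - fk N t) < eps / 3) in Hs. change (Rabs (f s - f t) < eps).
  pose proof (HN N s (le_n N) ltac:(lra)). pose proof (HN N t (le_n N) ltac:(lra)).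
  apply Rabs_def2 in Hs.
  repeat match goal with H : Rabs _ <= _ |- _ => apply Rabs_le_between in H end.
  apply Rabs_def1; lra.
Qed.

Lemma integral_eq_of_unif_cvg (fk hk : nat -> R -> R) (f h : R -> R) c t : 0 <= t ->
  continuous_all h -> (forall k, continuous_all (hk k)) ->
  unif_cvg_on fk f t t -> unif_cvg_on hk h 0 t ->
  (forall k, fk (S k) t = c + RInt (hk k) 0 t) -> f t = c + RInt h 0 t.
Proof.
  intros Ht Ch Chk Hf Hh Hrec. apply eq_of_forall_abs_le. intros eps He.
  assert (He' : 0 < eps / (1 + t)) by (apply Rdiv_lt_0_compat; lra).
  destruct (Hf _ He') as [N1 HN1]. destruct (Hh _ He') as [N2 HN2].
  assert (A := HN1 (S (max N1 N2)) t ltac:(lia) ltac:(lra)). rewrite Hrec in A.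
  assert (B : Rabs (RInt (fun s => hk (max N1 N2) s - h s) 0 t)
              <= RInt (fun _ => eps / (1 + t)) 0 t).
  { apply abs_RInt_le_RInt; [exact Ht | | intros s; apply continuous_const |].
    - intros s. apply (continuous_minus (V := R_NormedModule) (hk (max N1 N2)) h);
        [apply Chk | apply Ch].
    - intros s Hs. rewrite Rabs_minus_sym. apply HN2; [lia | exact Hs]. }
  rewrite RInt_minus_continuous, RInt_const_R in B by auto.
  assert (E : eps / (1 + t) + (t - 0) * (eps / (1 + t)) = eps) by (field; lra).
  replace (f t - (c + RInt h 0 t)) with
    ((f t - (c + RInt (hk (max N1 N2)) 0 t)) + (RInt (hk (max N1 N2)) 0 t - RInt h 0 t)) by ring.
  eapply Rle_trans; [apply Rabs_triang | lra].
Qed.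

(** * Lipschitz second-order equations: existence and continuous dependence *)

Section LipschitzODE.

Variables (g : R -> R -> R) (L : R).
Hypothesis g_lipschitz : forall v w v' w',
  Rabs (g v w - g v' w') <= L * (Rabs (v - v') + Rabs (w - w')).

Definition ode_sol (m n : R) (V W : R -> R) : Prop :=
  V 0 = m /\ W 0 = n /\
  (forall t, 0 <= t -> is_derive V t (W t)) /\
  (forall t, 0 <= t -> is_derive W t (g (V t) (W t))).

Lemma lipschitz_const_nonneg : 0 <= L.
Proof.
  pose proof (g_lipschitz 1 0 0 0). pose proof (Rabs_pos (g 1 0 - g 0 0)).
  rewrite Rminus_0_r, Rminus_diag, Rabs_R1, Rabs_R0 in H. lra.
Qed.

Lemma continuous_g_comp (V W : R -> R) t : continuous V t -> continuous W t ->
  continuous (fun s => g (V s) (W s)) t.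
Proof.
  intros HV HW. apply filterlim_locally. intros eps.
  pose proof lipschitz_const_nonneg.
  assert (Hd : 0 < eps / (2 * L + 2)) by (apply Rdiv_lt_0_compat; [apply cond_pos | lra]).
  assert (LV : locally t (fun s => ball (V t) (mkposreal _ Hd) (V s)))
    by apply (HV _ (locally_ball _ _)).
  assert (LW : locally t (fun s => ball (W t) (mkposreal _ Hd) (W s)))
    by apply (HW _ (locally_ball _ _)).
  generalize (filter_and _ _ LV LW). apply filter_imp. intros s [Hs1 Hs2].
  change (Rabs (V s - V t) < eps / (2 * L + 2)) in Hs1.
  change (Rabs (W s - W t) < eps / (2 * L + 2)) in Hs2.
  change (Rabs (g (V s) (W s) - g (V t) (W t)) < eps).
  pose proof (g_lipschitz (V s) (W s) (V t) (W t)).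
  assert (E : eps / (2 * L + 2) * (2 * L + 2) = eps) by (field; lra).
  pose proof (cond_pos eps). nra.
Qed.

Lemma unif_cvg_g_comp (Vk Wk : nat -> R -> R) (V W : R -> R) a b :
  unif_cvg_on Vk V a b -> unif_cvg_on Wk W a b ->
  unif_cvg_on (fun k s => g (Vk k s) (Wk k s)) (fun s => g (V s) (W s)) a b.
Proof.
  intros HV HW eps He. pose proof lipschitz_const_nonneg.
  assert (Hd : 0 < eps / (2 * L + 2)) by (apply Rdiv_lt_0_compat; lra).
  destruct (HV _ Hd) as [N1 HN1]. destruct (HW _ Hd) as [N2 HN2].
  exists (max N1 N2). intros k x Hk Hx.
  pose proof (HN1 k x ltac:(lia) Hx). pose proof (HN2 k x ltac:(lia) Hx).
  pose proof (g_lipschitz (V x) (W x) (Vk k x) (Wk k x)).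
  assert (E : eps / (2 * L + 2) * (2 * L + 2) = eps) by (field; lra).
  nra.
Qed.

Section Picard.

Variables m n : R.

Fixpoint picard (k : nat) : (R -> R) * (R -> R) :=
  match k with
  | O => (fun _ => m, fun _ => n)
  | S k => (fun t => m + RInt (snd (picard k)) 0 t,
            fun t => n + RInt (fun s => g (fst (picard k) s) (snd (picard k) s)) 0 t)
  end.

Local Notation PV k := (fst (picard k)).
Local Notation PW k := (snd (picard k)).

Lemma picard_V_S k t : PV (S k) t = m + RInt (PW k) 0 t.
Proof. reflexivity. Qed.

Lemma picard_W_S k t : PW (S k) t = n + RInt (fun s => g (PV k s) (PW k s)) 0 t.
Proof. reflexivity. Qed.

Lemma picard_continuous k : continuous_all (PV k) /\ continuous_all (PW k).
Proof.
  induction k as [|k [IHV IHW]].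
  - split; intros t; apply continuous_const.
  - split; apply continuous_all_primitive; [exact IHW|].
    intros t. now apply continuous_g_comp.
Qed.

(* 1 + L is the Lipschitz constant of (v, w) |-> (w, g v w) for the norm |v| + |w|. *)
Definition picard_bound (T : R) (j : nat) : R :=
  (Rabs n + Rabs (g m n)) * ((1 + L) * T) ^ S j / INR (fact (S j)).

Lemma picard_bound_continuous j : continuous_all (fun s => (1 + L) * picard_bound s j).
Proof.
  intros s. apply (ex_derive_continuous (K := R_AbsRing) (V := R_NormedModule)).
  unfold picard_bound. auto_derive. exact I.
Qed.

Lemma picard_step_bound k t : 0 <= t ->
  Rabs (PV (S k) t - PV k t) + Rabs (PW (S k) t - PW k t) <= picard_bound t k.
Proof.
  pose proof lipschitz_const_nonneg.
  revert t. induction k as [|k IH]; intros t Ht.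
  - rewrite picard_V_S, picard_W_S. simpl. rewrite !RInt_const_R.
    replace (m + (t - 0) * n - m) with (t * n) by ring.
    replace (n + (t - 0) * g m n - n) with (t * g m n) by ring.
    rewrite !Rabs_mult, (Rabs_right t) by lra. unfold picard_bound. simpl.
    pose proof (Rabs_pos n). pose proof (Rabs_pos (g m n)). rewrite Rdiv_1_r.
    assert (0 <= (Rabs n + Rabs (g m n)) * (L * t))
      by (apply Rmult_le_pos; [lra | now apply Rmult_le_pos]).
    nra.
  - destruct (picard_continuous k) as [CV CW]. destruct (picard_continuous (S k)) as [CV' CW'].
    assert (Cg : forall j, continuous_all (fun s => g (PV j s) (PW j s))).
    { intros j t'. destruct (picard_continuous j). now apply continuous_g_comp. }
    rewrite (picard_V_S (S k)), (picard_V_S k), (picard_W_S (S k)), (picard_W_S k).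
    replace (m + RInt (PW (S k)) 0 t - (m + RInt (PW k) 0 t))
      with (RInt (PW (S k)) 0 t - RInt (PW k) 0 t) by ring.
    replace (n + RInt (fun s => g (PV (S k) s) (PW (S k) s)) 0 t
             - (n + RInt (fun s => g (PV k s) (PW k s)) 0 t))
      with (RInt (fun s => g (PV (S k) s) (PW (S k) s)) 0 t
            - RInt (fun s => g (PV k s) (PW k s)) 0 t) by ring.
    rewrite <- !RInt_minus_continuous by auto.
    replace (picard_bound t (S k)) with (RInt (fun s => (1 + L) * picard_bound s k) 0 t)
      by (unfold picard_bound; apply RInt_pow_fact).
    apply abs_RInt_add_le; [exact Ht | | | apply picard_bound_continuous |].
    + intros s. now apply (continuous_minus (V := R_NormedModule) (PW (S k)) (PW k)).
    + intros s. apply (continuous_minus (V := R_NormedModule)); apply Cg.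
    + intros s Hs. specialize (IH s ltac:(lra)).
      pose proof (g_lipschitz (PV (S k) s) (PW (S k) s) (PV k s) (PW k s)).
      pose proof (Rabs_pos (PV (S k) s - PV k s)). nra.
Qed.

Lemma picard_bound_summable T : ex_series (picard_bound T).
Proof.
  assert (E : ex_series (fun j => scal (pow_n ((1 + L) * T) j) (/ INR (fact j))))
    by (eexists; apply is_exp_Reals).
  apply ex_series_incr_1, (ex_series_scal_l (Rabs n + Rabs (g m n))) in E.
  refine (ex_series_ext _ _ _ E). intros j.
  unfold picard_bound. rewrite pow_n_pow. unfold scal; simpl. unfold mult; simpl.
  unfold Rdiv. ring.
Qed.

Lemma picard_bound_le x T j : 0 <= x <= T -> picard_bound x j <= picard_bound T j.
Proof.
  intros Hx. pose proof lipschitz_const_nonneg. unfold picard_bound, Rdiv.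
  apply Rmult_le_compat_r; [left; apply Rinv_0_lt_compat, INR_fact_lt_0|].
  apply Rmult_le_compat_l; [pose proof (Rabs_pos n); pose proof (Rabs_pos (g m n)); lra|].
  apply pow_incr. nra.
Qed.

(* The bounds on the iterates hold only for t >= 0; evaluating at Rmax 0 t makes the limits
   continuous on all of R. *)
Definition picard_lim_V t := m + Series (fun j => PV (S j) (Rmax 0 t) - PV j (Rmax 0 t)).
Definition picard_lim_W t := n + Series (fun j => PW (S j) (Rmax 0 t) - PW j (Rmax 0 t)).

Lemma picard_lim_approx T k x : 0 <= x <= T ->
  Rabs (picard_lim_V x - PV k x) <= Series (fun j => picard_bound T (k + j)) /\
  Rabs (picard_lim_W x - PW k x) <= Series (fun j => picard_bound T (k + j)).
Proof.
  intros Hx. unfold picard_lim_V, picard_lim_W. rewrite Rmax_right by lra.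
  assert (B := fun j =>
    Rle_trans _ _ _ (picard_step_bound j x ltac:(lra)) (picard_bound_le x T j Hx)).
  split.
  - apply (telescoping_tail_bound (fun j => PV j x)); [apply picard_bound_summable|].
    intros j. specialize (B j). pose proof (Rabs_pos (PW (S j) x - PW j x)). lra.
  - apply (telescoping_tail_bound (fun j => PW j x)); [apply picard_bound_summable|].
    intros j. specialize (B j). pose proof (Rabs_pos (PV (S j) x - PV j x)). lra.
Qed.

Lemma picard_unif_cvg T : unif_cvg_on (fun k => PV k) picard_lim_V 0 T /\
  unif_cvg_on (fun k => PW k) picard_lim_W 0 T.
Proof.
  split; intros eps He;
    destruct (series_tail_small _ eps (picard_bound_summable T) He) as [N HN];
    exists N; intros k x Hk Hx; specialize (HN k Hk);
    pose proof (Rle_abs (Series (fun j => picard_bound T (k + j))));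
    pose proof (picard_lim_approx T k x Hx); lra.
Qed.

Lemma picard_lim_continuous : continuous_all picard_lim_V /\ continuous_all picard_lim_W.
Proof.
  assert (Clamp : forall (fk : nat -> R -> R) f T, unif_cvg_on fk f 0 T ->
            (forall x, f x = f (Rmax 0 x)) ->
            unif_cvg_on (fun k s => fk k (Rmax 0 s)) f (- T) T).
  { intros fk f T Hu Hf eps He. destruct (Hu eps He) as [N HN]. exists N. intros k x Hk Hx.
    rewrite Hf. apply HN; [exact Hk|]. unfold Rmax. destruct Rle_dec; lra. }
  assert (Idem : forall x, Rmax 0 (Rmax 0 x) = Rmax 0 x) by (intros; apply Rmax_right, Rmax_l).
  split; intros t; destruct (picard_unif_cvg (Rabs t + 1)) as [UV UW].
  - apply (continuous_of_unif_cvg (fun k s => PV k (Rmax 0 s)) _ (- (Rabs t + 1)) (Rabs t + 1)).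
    + intros k. apply (continuous_comp (fun s => Rmax 0 s));
        [apply continuous_Rmax0 | apply picard_continuous].
    + apply Clamp; [exact UV|]. intros x. unfold picard_lim_V. now rewrite Idem.
    + split_Rabs; lra.
  - apply (continuous_of_unif_cvg (fun k s => PW k (Rmax 0 s)) _ (- (Rabs t + 1)) (Rabs t + 1)).
    + intros k. apply (continuous_comp (fun s => Rmax 0 s));
        [apply continuous_Rmax0 | apply picard_continuous].
    + apply Clamp; [exact UW|]. intros x. unfold picard_lim_W. now rewrite Idem.
    + split_Rabs; lra.
Qed.

Definition picard_sol_V t := m + RInt picard_lim_W 0 t.
Definition picard_sol_W t := n + RInt (fun s => g (picard_lim_V s) (picard_lim_W s)) 0 t.

Lemma picard_lim_eq_sol t : 0 <= t ->
  picard_lim_V t = picard_sol_V t /\ picard_lim_W t = picard_sol_W t.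
Proof.
  intros Ht. destruct picard_lim_continuous as [CV CW].
  destruct (picard_unif_cvg t) as [UV UW].
  assert (At : forall fk f, unif_cvg_on fk f 0 t -> unif_cvg_on fk f t t).
  { intros fk f Hu eps He. destruct (Hu eps He) as [N HN]. exists N. intros k x Hk Hx.
    apply HN; [exact Hk | lra]. }
  split.
  - apply (integral_eq_of_unif_cvg (fun k => PV k) (fun k => PW k)); auto.
    intros k. apply picard_continuous.
  - apply (integral_eq_of_unif_cvg (fun k => PW k) (fun k s => g (PV k s) (PW k s))); auto.
    + intros s. now apply continuous_g_comp.
    + intros k s. destruct (picard_continuous k). now apply continuous_g_comp.
    + now apply unif_cvg_g_comp.
Qed.

Lemma ode_sol_picard : ode_sol m n picard_sol_V picard_sol_W.
Proof.
  destruct picard_lim_continuous as [CV CW].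
  assert (Cg : continuous_all (fun s => g (picard_lim_V s) (picard_lim_W s)))
    by (intros s; now apply continuous_g_comp).
  split; [|split; [|split]].
  - unfold picard_sol_V. rewrite RInt_point. apply Rplus_0_r.
  - unfold picard_sol_W. rewrite RInt_point. apply Rplus_0_r.
  - intros t Ht. destruct (picard_lim_eq_sol t Ht) as [_ <-].
    now apply (is_derive_primitive picard_lim_W m).
  - intros t Ht. destruct (picard_lim_eq_sol t Ht) as [<- <-].
    now apply (is_derive_primitive (fun s => g (picard_lim_V s) (picard_lim_W s)) n).
Qed.

End Picard.

Definition phase_dist2 (V1 W1 V2 W2 : R -> R) (s : R) : R :=
  (V1 s - V2 s) ^ 2 + (W1 s - W2 s) ^ 2.

Definition phase_dist2_rate (V1 W1 V2 W2 : R -> R) (s : R) : R :=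
  2 * (V1 s - V2 s) * (W1 s - W2 s) + 2 * (W1 s - W2 s) * (g (V1 s) (W1 s) - g (V2 s) (W2 s)).

Lemma is_derive_phase_dist2 m1 n1 m2 n2 V1 W1 V2 W2 x :
  ode_sol m1 n1 V1 W1 -> ode_sol m2 n2 V2 W2 -> 0 <= x ->
  is_derive (phase_dist2 V1 W1 V2 W2) x (phase_dist2_rate V1 W1 V2 W2 x).
Proof.
  intros [_ [_ [HV1 HW1]]] [_ [_ [HV2 HW2]]] Hx.
  replace (phase_dist2_rate V1 W1 V2 W2 x) with
    (INR 2 * (W1 x - W2 x) * (V1 x - V2 x) ^ pred 2
     + INR 2 * (g (V1 x) (W1 x) - g (V2 x) (W2 x)) * (W1 x - W2 x) ^ pred 2)
    by (unfold phase_dist2_rate; simpl; ring).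
  apply (is_derive_plus (fun s => (V1 s - V2 s) ^ 2) (fun s => (W1 s - W2 s) ^ 2));
    apply (is_derive_pow (fun s => _ s - _ s)), (is_derive_minus (V := R_NormedModule)); auto.
Qed.

Lemma phase_dist2_rate_bound V1 W1 V2 W2 x :
  Rabs (phase_dist2_rate V1 W1 V2 W2 x) <= (1 + 3 * L) * phase_dist2 V1 W1 V2 W2 x.
Proof.
  unfold phase_dist2_rate, phase_dist2. pose proof lipschitz_const_nonneg.
  set (a := V1 x - V2 x). set (b := W1 x - W2 x).
  set (d := g (V1 x) (W1 x) - g (V2 x) (W2 x)).
  assert (Hd : Rabs d <= L * (Rabs a + Rabs b)) by apply g_lipschitz.
  rewrite <- (pow2_abs a), <- (pow2_abs b).
  eapply Rle_trans; [apply Rabs_triang|]. rewrite !Rabs_mult, (Rabs_right 2) by lra.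
  pose proof (Rabs_pos a). pose proof (Rabs_pos b).
  assert (Rabs b * Rabs d <= Rabs b * (L * (Rabs a + Rabs b))) by (apply Rmult_le_compat_l; lra).
  assert (0 <= L * (Rabs a - Rabs b) ^ 2) by (apply Rmult_le_pos; [lra | apply pow2_ge_0]).
  pose proof (pow2_ge_0 (Rabs a - Rabs b)).
  nra.
Qed.

Lemma phase_dist2_growth m1 n1 m2 n2 V1 W1 V2 W2 t :
  ode_sol m1 n1 V1 W1 -> ode_sol m2 n2 V2 W2 -> 0 <= t ->
  phase_dist2 V1 W1 V2 W2 t <= exp ((1 + 3 * L) * t) * phase_dist2 V1 W1 V2 W2 0 /\
  phase_dist2 V1 W1 V2 W2 0 <= exp ((1 + 3 * L) * t) * phase_dist2 V1 W1 V2 W2 t.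
Proof.
  intros S1 S2 Ht.
  set (C := 1 + 3 * L). set (E := phase_dist2 V1 W1 V2 W2). set (D := phase_dist2_rate V1 W1 V2 W2).
  assert (Hd : forall x, 0 <= x <= t -> is_derive E x (D x))
    by (intros x Hx; apply (is_derive_phase_dist2 m1 n1 m2 n2); auto; lra).
  assert (Hb : forall x, - (C * E x) <= D x <= C * E x)
    by (intros x; apply Rabs_le_between, phase_dist2_rate_bound).
  split.
  - assert (M := exp_weighted_mono (fun s => - E s) (fun s => - D s) C 0 t Ht).
    assert (K : exp (- C * t) * E t <= E 0).
    { replace (- C * 0) with 0 in M by ring. rewrite exp_0 in M.
      assert (exp (- C * t) * - E t >= 1 * - E 0); [|lra]. apply Rle_ge, M.
      - intros x Hx. apply (is_derive_opp E), Hd, Hx.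
      - intros x _. specialize (Hb x). lra. }
    assert (Hinv : exp (C * t) * exp (- C * t) = 1)
      by (rewrite <- exp_plus; replace (C * t + - C * t) with 0 by ring; apply exp_0).
    assert (0 < exp (C * t)) by apply exp_pos.
    replace (E t) with (exp (C * t) * (exp (- C * t) * E t))
      by (rewrite <- Rmult_assoc, Hinv; ring).
    now apply Rmult_le_compat_l; [lra|].
  - assert (M := exp_weighted_mono E D (- C) 0 t Ht Hd ltac:(intros x _; specialize (Hb x); lra)).
    replace (- - C * 0) with 0 in M by ring. replace (- - C * t) with (C * t) in M by ring.
    rewrite exp_0 in M. lra.
Qed.

End LipschitzODE.

Lemma damped_lower_bound (W h : R -> R) c a t : a <= t ->
  (forall x, a <= x <= t -> is_derive W x (h x - 3 * W x)) ->
  (forall x, a <= x <= t -> c <= h x) ->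
  c / 3 + (W a - c / 3) * exp (-3 * (t - a)) <= W t.
Proof.
  intros Hat Hd Hh.
  assert (K : exp (3 * a) * (W a - c / 3) <= exp (3 * t) * (W t - c / 3)).
  { replace (3 * a) with (- -3 * a) by ring. replace (3 * t) with (- -3 * t) by ring.
    apply (exp_weighted_mono (fun s => W s - c / 3) (fun s => h s - 3 * W s)); [exact Hat | |].
    - intros x Hx. rewrite <- (Rminus_0_r (h x - 3 * W x)).
      apply (is_derive_minus W (fun _ => c / 3)); [now apply Hd|].
      apply (is_derive_const (K := R_AbsRing) (V := R_NormedModule)).
    - intros x Hx. specialize (Hh x Hx). lra. }
  assert (E : exp (-3 * (t - a)) = exp (3 * a) * / exp (3 * t))
    by (rewrite <- exp_Ropp, <- exp_plus; f_equal; ring).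
  assert (HB : 0 < exp (3 * t)) by apply exp_pos.
  apply (Rmult_le_compat_l (/ exp (3 * t))) in K; [|left; now apply Rinv_0_lt_compat].
  rewrite <- (Rmult_assoc _ (exp (3 * t))), Rinv_l in K by lra.
  rewrite E. lra.
Qed.

Lemma damped_upper_bound (W h : R -> R) c a t : a <= t ->
  (forall x, a <= x <= t -> is_derive W x (h x - 3 * W x)) ->
  (forall x, a <= x <= t -> h x <= c) ->
  W t <= c / 3 + (W a - c / 3) * exp (-3 * (t - a)).
Proof.
  intros Hat Hd Hh.
  enough (- c / 3 + (- W a - - c / 3) * exp (-3 * (t - a)) <= - W t) by lra.
  apply (damped_lower_bound (fun s => - W s) (fun s => - h s)); [exact Hat | |].
  - intros x Hx. replace (- h x - 3 * - W x) with (- (h x - 3 * W x)) by ring.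
    apply (is_derive_opp W), Hd, Hx.
  - intros x Hx. specialize (Hh x Hx). lra.
Qed.

Lemma integrated_lower_bound (V W : R -> R) A B t : 0 <= t ->
  (forall x, 0 <= x <= t -> is_derive V x (W x)) ->
  (forall x, 0 <= x <= t -> A * exp (-3 * x) + B <= W x) ->
  V 0 + A * (1 - exp (-3 * t)) / 3 + B * t <= V t.
Proof.
  intros Ht Hd Hw.
  assert (K : V 0 + A * exp (-3 * 0) / 3 - B * 0 <= V t + A * exp (-3 * t) / 3 - B * t).
  { apply (nondecreasing_of_derive_nonneg (fun s => V s + A * exp (-3 * s) / 3 - B * s)
             (fun s => W s - A * exp (-3 * s) - B)); [exact Ht | |].
    - intros x Hx. auto_derive; [repeat split; exists (W x); now apply Hd|].
      replace (Derive (fun x0 : R => V x0) x) with (W x)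
        by (symmetry; now apply is_derive_unique, Hd). field.
    - intros x Hx. specialize (Hw x Hx). lra. }
  replace (-3 * 0) with 0 in K by ring. rewrite exp_0 in K. lra.
Qed.

Lemma exp_m3_bounds : / 27 <= exp (-3) <= / 4.
Proof.
  replace (exp (-3)) with (/ exp 3) by (rewrite <- exp_Ropp; f_equal; ring).
  assert (4 <= exp 3) by (pose proof (exp_ineq1_le 3); lra).
  assert (exp 3 <= 27).
  { replace 3 with (1 + 1 + 1) by ring. rewrite !exp_plus.
    pose proof exp_le_3. pose proof (exp_pos 1). nra. }
  split; apply Rinv_le_contravar; lra.
Qed.

Definition ode_rhs (v w : R) : R := Rfun v - 3 * w.

Lemma ode_rhs_lipschitz v w v' w' :
  Rabs (ode_rhs v w - ode_rhs v' w') <= 4 * (Rabs (v - v') + Rabs (w - w')).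
Proof.
  unfold ode_rhs. pose proof (Rfun_lipschitz v v'). pose proof (Rabs_pos (w - w')).
  replace (Rfun v - 3 * w - (Rfun v' - 3 * w')) with ((Rfun v - Rfun v') + -3 * (w - w')) by ring.
  eapply Rle_trans; [apply Rabs_triang|]. rewrite Rabs_mult, (Rabs_left (-3)) by lra. lra.
Qed.

Definition shoot_V (m n : R) : R -> R := picard_sol_V ode_rhs m n.
Definition shoot_W (m n : R) : R -> R := picard_sol_W ode_rhs m n.

Lemma shoot_is_sol m n : is_sol m n (shoot_V m n) (shoot_W m n).
Proof. exact (ode_sol_picard ode_rhs 4 ode_rhs_lipschitz m n). Qed.

Section Trajectory.

Variables (m n : R) (V W : R -> R).
Hypothesis sol : is_sol m n V W.

Let V_derive : forall t, 0 <= t -> is_derive V t (W t) := proj1 (proj2 (proj2 sol)).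
Let W_derive : forall t, 0 <= t -> is_derive W t (Rfun (V t) - 3 * W t) :=
  proj2 (proj2 (proj2 sol)).

Lemma sol_W_pos_persists a : 0 <= a -> 0 < W a -> -1 < V a -> forall t, a <= t -> 0 < W t.
Proof.
  intros Ha HWa HVa. apply positive_persists; [| exact HWa |].
  { intros t Ht. apply (continuous_of_is_derive _ _ _ (W_derive t ltac:(lra))). }
  intros t Hat Hpos.
  assert (HV : forall x, a <= x <= t -> -1 <= V x).
  { intros x Hx. assert (V a <= V x); [|lra].
    apply (nondecreasing_of_derive_nonneg V W); [lra | intros; apply V_derive; lra |].
    intros; apply Hpos; lra. }
  assert (K := damped_lower_bound W (fun s => Rfun (V s)) 0 a t ltac:(lra)
                 ltac:(intros; apply W_derive; lra)
                 ltac:(intros x Hx; rewrite <- Rfun_m1; now apply Rfun_nondecreasing, HV)).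
  pose proof (exp_pos (-3 * (t - a))). nra.
Qed.

Lemma sol_W_neg_persists a : 0 <= a -> W a < 0 -> V a < -1 -> forall t, a <= t -> W t < 0.
Proof.
  intros Ha HWa HVa t Hat. enough (0 < - W t) by lra. revert t Hat.
  apply (positive_persists (fun s => - W s)); [| lra |].
  { intros t Ht. apply (continuous_opp (V := R_NormedModule)).
    apply (continuous_of_is_derive _ _ _ (W_derive t ltac:(lra))). }
  intros t Hat Hneg.
  assert (HV : forall x, a <= x <= t -> V x <= -1).
  { intros x Hx. assert (- V a <= - V x); [|lra].
    apply (nondecreasing_of_derive_nonneg (fun s => - V s) (fun s => - W s)); [lra | |].
    - intros; apply (is_derive_opp V), V_derive; lra.
    - intros; apply Hneg; lra. }
  assert (K := damped_upper_bound W (fun s => Rfun (V s)) 0 a t ltac:(lra)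
                 ltac:(intros; apply W_derive; lra)
                 ltac:(intros x Hx; rewrite <- Rfun_m1; now apply Rfun_nondecreasing, HV)).
  pose proof (exp_pos (-3 * (t - a))). nra.
Qed.

(* The equilibrium (-1, 0) is itself a solution; compare with it backwards in time. *)
Lemma sol_not_equilibrium t : 0 <= t -> V t = -1 -> W t = 0 -> m = -1.
Proof.
  intros Ht HVt HWt.
  assert (Eq : ode_sol ode_rhs (-1) 0 (fun _ => -1) (fun _ => 0)).
  { split; [reflexivity | split; [reflexivity | split; intros s _]].
    - apply (is_derive_const (K := R_AbsRing) (V := R_NormedModule)).
    - unfold ode_rhs. rewrite Rfun_m1, Rmult_0_r, Rminus_0_r.
      apply (is_derive_const (K := R_AbsRing) (V := R_NormedModule)). }
  destruct (phase_dist2_growth ode_rhs 4 ode_rhs_lipschitz m n (-1) 0 V W _ _ t sol Eq Ht)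
    as [_ K].
  unfold phase_dist2 in K. rewrite HVt, HWt, (proj1 sol), (proj1 (proj2 sol)) in K.
  replace ((-1 - -1) ^ 2 + (0 - 0) ^ 2) with 0 in K by ring. rewrite Rmult_0_r in K.
  pose proof (pow2_ge_0 (m - -1)). pose proof (pow2_ge_0 (n - 0)). nra.
Qed.

Lemma sol_approaches_m1 : (forall t, 0 < t -> 0 < W t /\ V t <= -1) ->
  forall eps, 0 < eps -> exists t, 1 <= t /\ -1 - eps < V t.
Proof.
  intros Hbeta eps He. apply NNPP. intros Hn.
  assert (HV : forall t, 1 <= t -> V t <= -1 - eps).
  { intros t Ht. apply Rnot_lt_le. intros H. apply Hn. now exists t. }
  set (d := - Rfun (-1 - eps)).
  assert (Hd : 0 < d) by (unfold d; pose proof (Rfun_neg (-1 - eps) ltac:(lra)); lra).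
  destruct (Hbeta 1 ltac:(lra)) as [HW1 _].
  (* T is chosen so that (W 1 + d/3) e^{-3 (T - 1)} < d/3, which forces W T < 0. *)
  set (T := 1 + (W 1 + d / 3) / d).
  assert (HTd : (T - 1) * d = W 1 + d / 3) by (unfold T; field; lra).
  assert (HT : 1 <= T) by (assert (0 <= T - 1) by nra; lra).
  assert (K := damped_upper_bound W (fun s => Rfun (V s)) (- d) 1 T HT
                 ltac:(intros; apply W_derive; lra)
                 ltac:(intros x Hx; unfold d; rewrite Ropp_involutive;
                       apply Rfun_nondecreasing, HV; lra)).
  destruct (Hbeta T ltac:(lra)) as [HWT _].
  assert (Hy : 1 + 3 * (T - 1) <= exp (3 * (T - 1))) by apply exp_ineq1_le.
  assert (E : exp (-3 * (T - 1)) * exp (3 * (T - 1)) = 1)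
    by (rewrite <- exp_plus; replace (-3 * (T - 1) + 3 * (T - 1)) with 0 by ring; apply exp_0).
  pose proof (exp_pos (3 * (T - 1))).
  assert (X : (W 1 + d / 3) * exp (-3 * (T - 1)) * exp (3 * (T - 1))
              > d / 3 * exp (3 * (T - 1))) by (apply Rmult_gt_compat_r; lra).
  rewrite Rmult_assoc, E in X. nra.
Qed.

Lemma sol_leaves_quadrant t : 0 < t -> 0 <= W t -> V t <= -1 -> ~ (0 < W t /\ V t < -1) ->
  (exists s, t < s /\ W s < 0 /\ V s < -1) \/ (exists s, t < s /\ 0 < W s /\ -1 < V s) \/
  m = -1.
Proof.
  intros Ht [HWt | HWt] [HVt | HVt] Hout; [tauto | right; left | left | right; right].
  - apply at_right_witness.
    + exact (at_right_gt _ t _ 0 (W_derive t ltac:(lra)) ltac:(lra) ltac:(lra)).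
    + exact (at_right_gt _ t _ (-1) (V_derive t ltac:(lra)) ltac:(lra) ltac:(lra)).
  - assert (Rfun (V t) - 3 * W t < 0) by (rewrite <- HWt; pose proof (Rfun_neg _ HVt); lra).
    apply at_right_witness.
    + exact (at_right_lt _ t _ 0 (W_derive t ltac:(lra)) ltac:(lra) ltac:(lra)).
    + exact (at_right_lt _ t _ (-1) (V_derive t ltac:(lra)) ltac:(lra) ltac:(lra)).
  - exact (sol_not_equilibrium t ltac:(lra) HVt (eq_sym HWt)).
Qed.

End Trajectory.

(** * Uniqueness *)

Lemma sol_W_gap_lower m n1 n2 V1 W1 V2 W2 t :
  is_sol m n1 V1 W1 -> is_sol m n2 V2 W2 -> 0 <= t ->
  (forall x, 0 <= x <= t -> W1 x <= W2 x) -> (n2 - n1) * exp (-3 * t) <= W2 t - W1 t.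
Proof.
  intros [HV10 [HW10 [HV1 HW1]]] [HV20 [HW20 [HV2 HW2]]] Ht Hle.
  assert (HV : forall x, 0 <= x <= t -> V1 x <= V2 x).
  { intros x Hx. assert (V2 0 - V1 0 <= V2 x - V1 x); [|lra].
    apply (nondecreasing_of_derive_nonneg (fun s => V2 s - V1 s) (fun s => W2 s - W1 s));
      [lra | intros; apply (is_derive_minus V2 V1); [apply HV2 | apply HV1]; lra |].
    intros y Hy. specialize (Hle y ltac:(lra)). lra. }
  assert (K : 0 / 3 + (W2 0 - W1 0 - 0 / 3) * exp (-3 * (t - 0)) <= W2 t - W1 t).
  { apply (damped_lower_bound (fun s => W2 s - W1 s) (fun s => Rfun (V2 s) - Rfun (V1 s)));
      [exact Ht | |].
    - intros x Hx.
      replace (Rfun (V2 x) - Rfun (V1 x) - 3 * (W2 x - W1 x))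
        with (Rfun (V2 x) - 3 * W2 x - (Rfun (V1 x) - 3 * W1 x)) by ring.
      apply (is_derive_minus W2 W1); [apply HW2 | apply HW1]; lra.
    - intros x Hx. pose proof (Rfun_nondecreasing _ _ (HV x Hx)). lra. }
  rewrite HW10, HW20, Rminus_0_r in K. lra.
Qed.

Lemma sol_W_ordered m n1 n2 V1 W1 V2 W2 :
  is_sol m n1 V1 W1 -> is_sol m n2 V2 W2 -> n1 < n2 -> forall t, 0 <= t -> W1 t < W2 t.
Proof.
  intros S1 S2 Hn t Ht. enough (0 < W2 t - W1 t) by lra. revert t Ht.
  pose proof S1 as (_ & HW10 & _ & HW1). pose proof S2 as (_ & HW20 & _ & HW2).
  apply (positive_persists (fun s => W2 s - W1 s)); [| lra |].
  - intros t Ht. apply (continuous_minus (V := R_NormedModule)).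
    + exact (continuous_of_is_derive _ _ _ (HW2 t Ht)).
    + exact (continuous_of_is_derive _ _ _ (HW1 t Ht)).
  - intros t Ht Hnn.
    assert (K := sol_W_gap_lower m n1 n2 V1 W1 V2 W2 t S1 S2 ltac:(lra)
                   ltac:(intros x Hx; specialize (Hnn x Hx); lra)).
    pose proof (exp_pos (-3 * t)). nra.
Qed.

Lemma sol_V_gap m n1 n2 V1 W1 V2 W2 :
  is_sol m n1 V1 W1 -> is_sol m n2 V2 W2 -> n1 < n2 ->
  forall t, 0 <= t -> V1 t + (n2 - n1) * (1 - exp (-3 * t)) / 3 <= V2 t.
Proof.
  intros S1 S2 Hn t Ht.
  pose proof S1 as (HV10 & _ & HV1 & _). pose proof S2 as (HV20 & _ & HV2 & _).
  assert (K : V2 0 - V1 0 + (n2 - n1) * (1 - exp (-3 * t)) / 3 + 0 * t <= V2 t - V1 t).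
  { apply (integrated_lower_bound (fun s => V2 s - V1 s) (fun s => W2 s - W1 s)); [exact Ht | |].
    - intros x Hx. apply (is_derive_minus V2 V1); [apply HV2 | apply HV1]; lra.
    - intros x Hx. rewrite Rplus_0_r.
      apply (sol_W_gap_lower m n1 n2 V1 W1 V2 W2 x S1 S2); [lra |].
      intros y Hy. left. apply (sol_W_ordered m n1 n2 V1 W1 V2 W2 S1 S2 Hn); lra. }
  rewrite HV10, HV20 in K. lra.
Qed.

Lemma beta0_at_most_one m n1 n2 : beta0 m n1 -> beta0 m n2 -> n1 < n2 -> False.
Proof.
  intros [V1 [W1 [S1 H1]]] [V2 [W2 [S2 H2]]] Hn.
  destruct (sol_approaches_m1 m n1 V1 W1 S1 H1 ((n2 - n1) / 4) ltac:(lra)) as [t [Ht HVt]].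
  pose proof (sol_V_gap m n1 n2 V1 W1 V2 W2 S1 S2 Hn t ltac:(lra)).
  destruct (H2 t ltac:(lra)) as [_ HV2].
  assert (exp (-3 * t) <= / 4)
    by (eapply Rle_trans; [apply exp_le_exp | apply exp_m3_bounds]; lra).
  nra.
Qed.

(** * Existence by shooting *)

Definition turns_back (m n : R) : Prop :=
  exists t, 0 < t /\ shoot_W m n t < 0 /\ shoot_V m n t < -1.

Definition overshoots (m n : R) : Prop :=
  exists t, 0 < t /\ 0 < shoot_W m n t /\ -1 < shoot_V m n t.

Lemma shoot_locally_close m n t c : 0 <= t -> 0 < c ->
  locally n (fun n' => Rabs (shoot_V m n' t - shoot_V m n t) < c /\
                       Rabs (shoot_W m n' t - shoot_W m n t) < c).
Proof.
  intros Ht Hc.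
  assert (He : 0 < c * exp (-13 * t)) by (apply Rmult_lt_0_compat; [lra | apply exp_pos]).
  exists (mkposreal _ He). intros n' Hn'. change (Rabs (n' - n) < c * exp (-13 * t)) in Hn'.
  destruct (phase_dist2_growth ode_rhs 4 ode_rhs_lipschitz m n' m n _ _ _ _ t
              (shoot_is_sol m n') (shoot_is_sol m n) Ht) as [K _].
  unfold phase_dist2 in K.
  rewrite (proj1 (shoot_is_sol m n')), (proj1 (shoot_is_sol m n)),
    (proj1 (proj2 (shoot_is_sol m n'))), (proj1 (proj2 (shoot_is_sol m n))) in K.
  (* 13 = 1 + 3 * 4 is the growth rate of phase_dist2 for the Lipschitz constant 4. *)
  replace (1 + 3 * 4) with 13 in K by ring.
  assert (E : exp (13 * t) * exp (-13 * t) = 1)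
    by (rewrite <- exp_plus; replace (13 * t + -13 * t) with 0 by ring; apply exp_0).
  assert (Hsmall : exp (-13 * t) <= 1) by (apply exp_le_1; lra).
  assert (0 < exp (13 * t)) by apply exp_pos.
  assert (Hn2 : (n' - n) ^ 2 < (c * exp (-13 * t)) ^ 2)
    by (rewrite <- pow2_abs; pose proof (Rabs_pos (n' - n)); nra).
  assert (Hsq : exp (13 * t) * ((m - m) ^ 2 + (n' - n) ^ 2) < c ^ 2).
  { replace ((m - m) ^ 2 + (n' - n) ^ 2) with ((n' - n) ^ 2) by ring.
    apply (Rmult_lt_compat_l (exp (13 * t))) in Hn2; [|lra].
    assert (Ec : exp (13 * t) * (c * exp (-13 * t)) ^ 2
                 = c ^ 2 * exp (-13 * t) * (exp (13 * t) * exp (-13 * t))) by ring.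
    rewrite E, Rmult_1_r in Ec. rewrite Ec in Hn2.
    pose proof (pow2_ge_0 c). nra. }
  assert (Hcomp : forall a b, a ^ 2 + b ^ 2 < c ^ 2 -> Rabs a < c /\ Rabs b < c).
  { intros a b Hab. rewrite <- (pow2_abs a), <- (pow2_abs b) in Hab.
    pose proof (Rabs_pos a). pose proof (Rabs_pos b). split; nra. }
  apply Hcomp. lra.
Qed.

Lemma turns_back_open m : open (turns_back m).
Proof.
  intros n [t [Ht [HW HV]]].
  set (c := Rmin (- shoot_W m n t) (-1 - shoot_V m n t)).
  assert (Hc1 : c <= - shoot_W m n t) by apply Rmin_l.
  assert (Hc2 : c <= -1 - shoot_V m n t) by apply Rmin_r.
  assert (Hc : 0 < c) by (apply Rmin_pos; lra).
  generalize (shoot_locally_close m n t c ltac:(lra) Hc). apply filter_imp.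
  intros n' [HV' HW']. apply Rabs_def2 in HV', HW'. exists t. split; [lra | split; lra].
Qed.

Lemma overshoots_open m : open (overshoots m).
Proof.
  intros n [t [Ht [HW HV]]].
  set (c := Rmin (shoot_W m n t) (shoot_V m n t + 1)).
  assert (Hc1 : c <= shoot_W m n t) by apply Rmin_l.
  assert (Hc2 : c <= shoot_V m n t + 1) by apply Rmin_r.
  assert (Hc : 0 < c) by (apply Rmin_pos; lra).
  generalize (shoot_locally_close m n t c ltac:(lra) Hc). apply filter_imp.
  intros n' [HV' HW']. apply Rabs_def2 in HV', HW'. exists t. split; [lra | split; lra].
Qed.

Lemma turns_back_overshoots_disjoint m n : turns_back m n -> overshoots m n -> False.
Proof.
  intros [ta [Hta [HWa HVa]]] [tb [Htb [HWb HVb]]].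
  pose proof (sol_W_neg_persists m n _ _ (shoot_is_sol m n) ta ltac:(lra) HWa HVa
                (Rmax ta tb) (Rmax_l _ _)).
  pose proof (sol_W_pos_persists m n _ _ (shoot_is_sol m n) tb ltac:(lra) HWb HVb
                (Rmax ta tb) (Rmax_r _ _)).
  lra.
Qed.

Lemma turns_back_nonpos m n : m < -1 -> n <= 0 -> turns_back m n.
Proof.
  intros Hm Hn. destruct (shoot_is_sol m n) as (HV0 & HW0 & HV & HW).
  assert (HWstart : shoot_W m n 0 < 0 \/ Rfun (shoot_V m n 0) - 3 * shoot_W m n 0 < 0).
  { rewrite HV0, HW0. destruct Hn; [left; lra | right; pose proof (Rfun_neg m Hm); lra]. }
  destruct (at_right_witness _ _ 0
              (at_right_lt _ 0 _ 0 (HW 0 (Rle_refl 0)) ltac:(lra) HWstart)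
              (at_right_lt _ 0 _ (-1) (HV 0 (Rle_refl 0)) ltac:(lra) ltac:(lra)))
    as [t [Ht [HWt HVt]]].
  now exists t.
Qed.

(* As Rfun >= -2, W t >= (n + 2/3) e^{-3t} - 2/3; with 1/27 <= e^{-3} <= 1/4 this gives
   W 1 > 0 and V 1 > -1 once n >= 18 - 4 m. *)
Lemma overshoots_large m : m < -1 -> overshoots m (18 - 4 * m).
Proof.
  intros Hm. set (n := 18 - 4 * m). destruct (shoot_is_sol m n) as (HV0 & HW0 & HV & HW).
  assert (Hlow : forall x, 0 <= x -> (n + 2 / 3) * exp (-3 * x) + - (2 / 3) <= shoot_W m n x).
  { intros x Hx.
    pose proof (damped_lower_bound (shoot_W m n) (fun s => Rfun (shoot_V m n s)) (-2) 0 x Hx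
                  (fun y Hy => HW y (proj1 Hy)) (fun y _ => Rfun_ge_m2 _)) as K.
    rewrite HW0, Rminus_0_r in K. lra. }
  pose proof (integrated_lower_bound (shoot_V m n) (shoot_W m n) (n + 2 / 3) (- (2 / 3)) 1
                ltac:(lra) (fun y Hy => HV y (proj1 Hy)) (fun y Hy => Hlow y (proj1 Hy))) as HV1.
  pose proof (Hlow 1 ltac:(lra)) as HW1.
  replace (-3 * 1) with (-3) in HV1, HW1 by ring. rewrite HV0 in HV1.
  pose proof exp_m3_bounds.
  exists 1. unfold n in *. split; [lra | split; nra].
Qed.

Lemma beta0_of_neither m n : m < -1 -> ~ turns_back m n -> ~ overshoots m n -> beta0 m n.
Proof.
  intros Hm Hb Ho.
  assert (Hn : 0 < n) by (apply Rnot_le_lt; intros Hn; now apply Hb, turns_back_nonpos).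
  pose proof (shoot_is_sol m n) as S. destruct (shoot_is_sol m n) as (HV0 & HW0 & HV & HW).
  set (V := shoot_V m n) in *. set (W := shoot_W m n) in *.
  assert (Inside : forall t, 0 <= t -> 0 < Rmin (W t) (-1 - V t)).
  { apply (positive_persists (fun s => Rmin (W s) (-1 - V s))).
    - intros t Ht. apply continuous_Rmin; [exact (continuous_of_is_derive _ _ _ (HW t Ht))|].
      apply (continuous_minus (V := R_NormedModule) (fun _ => -1) V); [apply continuous_const|].
      exact (continuous_of_is_derive _ _ _ (HV t Ht)).
    - rewrite HV0, HW0. apply Rmin_glb_lt; lra.
    - intros t Ht Hnn. specialize (Hnn t ltac:(lra)). cbv beta in Hnn.
      pose proof (Rmin_l (W t) (-1 - V t)). pose proof (Rmin_r (W t) (-1 - V t)).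
      destruct (classic (0 < W t /\ V t < -1)) as [[HWt HVt] | Hout];
        [apply Rmin_glb_lt; lra | exfalso].
      destruct (sol_leaves_quadrant m n V W S t ltac:(lra) ltac:(lra) ltac:(lra) Hout)
        as [[s Hs] | [[s Hs] | Hm1]].
      + apply Hb. exists s. split; [lra | exact (proj2 Hs)].
      + apply Ho. exists s. split; [lra | exact (proj2 Hs)].
      + lra. }
  exists V, W. split; [exact S|]. intros t Ht. specialize (Inside t ltac:(lra)).
  pose proof (Rmin_l (W t) (-1 - V t)). pose proof (Rmin_r (W t) (-1 - V t)). lra.
Qed.

Theorem lemma4p5 (m : R) (hm : m < -1) : exists! n : R, beta0 m n.
Proof.
  destruct (interval_not_open_split (turns_back m) (overshoots m) 0 (18 - 4 * m) ltac:(lra)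
              (turns_back_nonpos m 0 hm (Rle_refl 0)) (overshoots_large m hm)
              (turns_back_open m) (overshoots_open m) (turns_back_overshoots_disjoint m))
    as [n [_ [Hb Ho]]].
  pose proof (beta0_of_neither m n hm Hb Ho) as Hn.
  exists n. split; [exact Hn|]. intros n' Hn'.
  destruct (Rtotal_order n n') as [Hlt | [Heq | Hgt]]; [exfalso | exact Heq | exfalso].
  - exact (beta0_at_most_one m n n' Hn Hn' Hlt).
  - exact (beta0_at_most_one m n' n Hn' Hn Hgt).
Qed.
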